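(* Let $D$ be an oriented knot diagram and let $b$ be a point of $D$ that is not a crossing. Run the robot on $D$ starting at $b$. Then the resulting diagram (the post-robot diagram) is ascending from $b$.
   Context: The robot operates as follows: starting at $b$, it travels along the knot in the direction of the orientation, visiting every crossing twice, and stops when it returns to $b$. Whenever it arrives at a crossing along the over-strand, it leaves the crossing unchanged; whenever it arrives at a crossing along the under-strand, it switches that crossing so that the strand it is travelling on becomes the over-strand, and then passes through. The diagram obtained at the end is the post-robot diagram. An oriented knot diagram is ascending from a point $b$ (not a crossing) if, travelling along the knot from $b$ in the direction of the orientation, every crossing is first met along its under-strand and later along its over-strand; it is descending from $b$ if every crossing is first met along its over-strand. *)

(* Combinatorial model of an oriented knot diagram, read from
   a base point b (not a crossing) in the direction of the orientation:
   - [w : seq nat] is the Gauss word: the i-th entry is the label of the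
     i-th crossing passage met when travelling from b;
   - [ov : seq bool] records, for the i-th passage, whether the strand
     travelled on is the over-strand (true) or the under-strand (false). *)
From mathcomp Require Import all_boot.
Set Implicit Arguments. Unset Strict Implicit. Unset Printing Implicit Defensive.

Definition knot_diagram (w : seq nat) (ov : seq bool) : Prop :=
  [/\ forall c, c \in w -> count_mem c w = 2,
      size ov = size w &
      forall i j, i < j -> j < size w -> nth 0 w i = nth 0 w j ->
        nth false ov i != nth false ov j].

Definition robot_step (w : seq nat) (ov : seq bool) (i : nat) : seq bool :=
  if nth false ov i then ov
  else [seq (if nth 0 w j == nth 0 w i then j == i else nth false ov j)
        | j <- iota 0 (size w)].

Definition robot (w : seq nat) (ov : seq bool) : seq bool :=
  foldl (robot_step w) ov (iota 0 (size w)).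

Definition ascending (w : seq nat) (ov : seq bool) : Prop :=
  forall i j, i < j -> j < size w -> nth 0 w i = nth 0 w j ->
    nth false ov i = false /\ nth false ov j = true.

From mathcomp Require Import all_boot.

(* Since every crossing is met exactly twice and its two passages carry
   opposite over/under data, a robot step at passage k amounts to: make k
   over, make the other passage of its crossing under, change nothing else.
   Hence after the first k steps every crossing whose two passages are both
   among the first k is met first under and then over: a newly completed
   crossing is completed at its second passage, which the step makes over
   and its first passage under, while the crossings completed earlier are
   left untouched. *)

Set Implicit Arguments. Unset Strict Implicit. Unset Printing Implicit Defensive.

Lemma uniq_indices_leq_count (T : eqType) (x0 x : T) (s : seq T) (I : seq nat) :
  uniq I -> {subset I <= [pred i | (i < size s) && (nth x0 s i == x)]} ->
  size I <= count_mem x s.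
Proof.
move=> uniqI subI; rewrite -(mkseq_nth x0 s) /mkseq count_map -size_filter.
apply: uniq_leq_size => // i /subI /andP[lt_i_s s_i].
by rewrite mem_filter mem_iota /= s_i.
Qed.

Definition alternating (w : seq nat) (s : seq bool) : Prop :=
  forall i j, i < j -> j < size w -> nth 0 w i = nth 0 w j ->
    nth false s i != nth false s j.

Definition ascending_upto (w : seq nat) (s : seq bool) (k : nat) : Prop :=
  forall i j, i < j -> j < k -> nth 0 w i = nth 0 w j ->
    nth false s i = false /\ nth false s j = true.

Section RobotRun.

Variable w : seq nat.
Hypothesis twice : forall c, c \in w -> count_mem c w = 2.

Lemma partner_unique i j k : i < j -> j < size w -> k < size w ->
  nth 0 w i = nth 0 w j -> nth 0 w k = nth 0 w i -> (k == i) || (k == j).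
Proof.
move=> lt_ij lt_j_w lt_k_w w_ij w_ki; apply: contraT => /norP[neq_ki neq_kj].
have lt_i_w := ltn_trans lt_ij lt_j_w.
have := @uniq_indices_leq_count _ 0 (nth 0 w i) w [:: i; j; k].
rewrite twice ?mem_nth //; apply=> [|x].
  by rewrite /= !inE negb_or (ltn_eqF lt_ij) !(eq_sym _ k) neq_ki neq_kj.
rewrite !inE => /or3P[] /eqP->; apply/andP; split=> //.
- by rewrite w_ij.
- by rewrite w_ki.
Qed.

Lemma nth_robot_step s k j : alternating w s ->
  k < size w -> j < size w ->
  nth false (robot_step w s k) j =
    if nth 0 w j == nth 0 w k then j == k else nth false s j.
Proof.
move=> alt_s lt_k_w lt_j_w; rewrite /robot_step.
case: ifP => [s_k|_]; last by rewrite (nth_map 0) ?size_iota // nth_iota.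
case: eqP => [w_jk|//]; case: (ltngtP j k) => [lt_jk|lt_kj|->//].
- by have := alt_s j k lt_jk lt_k_w w_jk; rewrite s_k; case: (nth _ s j).
- by have := alt_s k j lt_kj lt_j_w (esym w_jk); rewrite s_k; case: (nth _ s j).
Qed.

Lemma alternating_robot_step s k : alternating w s ->
  k < size w -> alternating w (robot_step w s k).
Proof.
move=> alt_s lt_k_w i j lt_ij lt_j_w w_ij.
have lt_i_w := ltn_trans lt_ij lt_j_w.
rewrite !nth_robot_step // -w_ij.
case: (nth 0 w i =P nth 0 w k) => [w_ik|_]; last exact: alt_s.
have /orP[/eqP->|/eqP->] := partner_unique lt_ij lt_j_w lt_k_w w_ij (esym w_ik).
- by rewrite eqxx (gtn_eqF lt_ij).
- by rewrite eqxx (ltn_eqF lt_ij).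
Qed.

Lemma ascending_upto_robot_step s k : alternating w s ->
  ascending_upto w s k -> k < size w -> ascending_upto w (robot_step w s k) k.+1.
Proof.
move=> alt_s asc_s lt_k_w i j lt_ij lt_j_Sk w_ij.
have lt_j_w := leq_ltn_trans (ltnSE lt_j_Sk) lt_k_w.
have lt_i_w := ltn_trans lt_ij lt_j_w.
rewrite !nth_robot_step // -w_ij.
case: (nth 0 w i =P nth 0 w k) => [w_ik|neq_w_ik].
  have /orP[/eqP eq_ki|/eqP->] :=
    partner_unique lt_ij lt_j_w lt_k_w w_ij (esym w_ik).
    by move: lt_j_Sk; rewrite eq_ki ltnS leqNgt lt_ij.
  by rewrite eqxx (ltn_eqF lt_ij).
apply: asc_s => //; rewrite ltn_neqAle -ltnS lt_j_Sk andbT.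
by apply/eqP => eq_jk; apply: neq_w_ik; rewrite w_ij eq_jk.
Qed.

Lemma robot_prefix_invariant ov k : alternating w ov -> k <= size w ->
  let s := foldl (robot_step w) ov (iota 0 k) in
  alternating w s /\ ascending_upto w s k.
Proof.
move=> alt_ov; elim: k => [|k IHk] le_Sk_w; first by split.
have [alt_s asc_s] := IHk (ltnW le_Sk_w).
rewrite -[in iota _ _]addn1 iotaD foldl_cat add0n /=.
split; [exact: alternating_robot_step | exact: ascending_upto_robot_step].
Qed.

End RobotRun.

Theorem theorem1p2 (w : seq nat) (ov : seq bool) :
  knot_diagram w ov -> ascending w (robot w ov).
Proof.
case=> twice _ alt_ov.
by have [_] := robot_prefix_invariant twice alt_ov (leqnn (size w)).
Qed.
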